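(* Let $\gamma,\kappa_1,\kappa_2\ge 0$, $c>0$ and $0<a_1<a_2$ with $\gamma>\kappa_2$, and consider the scalar state-dependent delay differential equation $$u'(t)=-\gamma u(t)-\kappa_1 u\bigl(t-a_1-cu(t)\bigr)-\kappa_2 u\bigl(t-a_2-cu(t)\bigr).$$ Define the linear difference operator $L$ by $$Lu(s)=-\gamma u(s)-\kappa_1u(s-a_1)-\kappa_2u(s-a_2),$$ so that $$L^2u(s)=-\gamma Lu(s)-\sum_{j=1}^2\kappa_jLu(s-a_j).$$ Then for solutions $u$ lying in the (local) center or unstable manifold of the steady state $u\equiv0$, the equation can be written as the constant-delay equation $$u'(t)=Lu(t)+\sum_{i=1}^2\kappa_i\,c\,u(t)\,Lu(t-a_i)+\sum_{i,j=1}^2\kappa_i\kappa_j\,c^2\,u(t)\,u(t-a_i)\,Lu(t-a_i-a_j)-\frac12\bigl(cu(t)\bigr)^2\sum_{i=1}^2\kappa_i\,L^2u(t-a_i)+\mathcal{R}(t),$$ where the remainder satisfies $\mathcal{R}(t)=\mathcal{O}(\|u\|_5^4)$ with $\|u\|_5=\sup_{\theta\in[-5a_2,0]}|u(\theta)|$.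
   Context: The equation is the two-delay model $u'(t)=-\gamma u(t)-\kappa_1u(\alpha_1(t,u(t)))-\kappa_2u(\alpha_2(t,u(t)))$ with $\alpha_i(t,u(t))=t-a_i-c_iu(t)$, taken here with $c_1=c_2=c$. Under $\gamma>\kappa_2$ the state-dependent delays are bounded and never become advanced. Solutions on the center or unstable manifold of $u\equiv0$ are those that can be extended backward in time for all negative times while remaining near $0$. The remainder estimate $\mathcal{O}(\|u\|_5^4)$ refers to small solutions, i.e. $u$ close to the steady state $0$. *)

From Stdlib Require Import Reals.
Open Scope R_scope.

Definition Lop (g k1 k2 a1 a2 : R) (u : R -> R) (s : R) : R :=
  - g * u s - k1 * u (s - a1) - k2 * u (s - a2).

Definition L2op (g k1 k2 a1 a2 : R) (u : R -> R) (s : R) : R :=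
  Lop g k1 k2 a1 a2 (Lop g k1 k2 a1 a2 u) s.

Definition sdde_rhs (g k1 k2 a1 a2 c : R) (u : R -> R) (t : R) : R :=
  - g * u t - k1 * u (t - a1 - c * u t) - k2 * u (t - a2 - c * u t).

Definition expansion (g k1 k2 a1 a2 c : R) (u : R -> R) (t : R) : R :=
  let L := Lop g k1 k2 a1 a2 u in
  let L2 := L2op g k1 k2 a1 a2 u in
  L t
  + (k1 * c * u t * L (t - a1) + k2 * c * u t * L (t - a2))
  + ( k1 * k1 * c ^ 2 * u t * u (t - a1) * L (t - a1 - a1)
    + k1 * k2 * c ^ 2 * u t * u (t - a1) * L (t - a1 - a2)
    + k2 * k1 * c ^ 2 * u t * u (t - a2) * L (t - a2 - a1)
    + k2 * k2 * c ^ 2 * u t * u (t - a2) * L (t - a2 - a2))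
  - / 2 * (c * u t) ^ 2 * (k1 * L2 (t - a1) + k2 * L2 (t - a2)).

Definition remainder (g k1 k2 a1 a2 c : R) (u : R -> R) (t : R) : R :=
  sdde_rhs g k1 k2 a1 a2 c u t - expansion g k1 k2 a1 a2 c u t.

From Stdlib Require Import Reals Lra Psatz.
From Coquelicot Require Import Coquelicot.
Open Scope R_scope.

(* Write the equation as u'(t) = Lu(t) - sum_i k_i (u(t - a_i - c u(t)) - u(t - a_i))
   and expand each bracket to second order in the shift c u(t).  The first-order
   coefficient u'(t - a_i) is replaced by its own first-order expansion, obtained
   from the equation in the same way, and the second-order coefficient
   u''(t - a_i) by L^2 u(t - a_i).  On the history segment [t - 5 a2, t], where
   |u| <= M, one has u' = O(M), u' - Lu = O(M^2) and u'' - L^2 u = O(M^2), while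
   all shifts are O(M); taking c M <= a1 / 4 keeps every delayed argument inside
   the segment, and the collected errors are O(M^4). *)

Definition lipschitz_on (v : R -> R) (lo hi l : R) : Prop :=
  forall x y, lo <= x <= hi -> lo <= y <= hi -> Rabs (v x - v y) <= l * Rabs (x - y).

Lemma lipschitz_on_of_is_derive (v v' : R -> R) (lo hi l : R) :
  (forall x, lo <= x <= hi -> is_derive v x (v' x)) ->
  (forall x, lo <= x <= hi -> Rabs (v' x) <= l) ->
  lipschitz_on v lo hi l.
Proof.
  intros Hv Hb x y Hx Hy.
  assert (Hseg : forall z, Rmin y x <= z <= Rmax y x -> lo <= z <= hi).
  { intros z Hz.
    pose proof (Rmin_glb y x lo ltac:(lra) ltac:(lra)).
    pose proof (Rmax_lub y x hi ltac:(lra) ltac:(lra)).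
    lra. }
  destruct (MVT_abs v v' y x) as [z [-> Hz]].
  - intros z Hz. apply is_derive_Reals, Hv, Hseg, Hz.
  - apply Rmult_le_compat_r; [apply Rabs_pos | apply Hb, Hseg, Hz].
Qed.

(* [auto_derive] leaves derivatives of abstract functions in eta-expanded form. *)
Lemma is_derive_unique_eta (f : R -> R) (x l : R) :
  is_derive f x l -> Derive (fun y => f y) x = l.
Proof. apply is_derive_unique. Qed.

Lemma taylor2_approx (f f' f'' : R -> R) (y h q B : R) :
  (forall z, y - Rabs h <= z <= y + Rabs h -> is_derive f z (f' z)) ->
  (forall z, y - Rabs h <= z <= y + Rabs h -> is_derive f' z (f'' z)) ->
  (forall z, y - Rabs h <= z <= y + Rabs h -> Rabs (f'' z - q) <= B) ->
  Rabs (f (y - h) - f y + h * f' y - h ^ 2 / 2 * q) <= B * h ^ 2.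
Proof.
  intros Hf Hf' Hq.
  set (psi := fun r => f (y - r) - f y + r * f' y - r ^ 2 / 2 * q).
  set (psi' := fun r => f' y - f' (y - r) - r * q).
  assert (Hh := proj1 (Rabs_le_between h (Rabs h)) (Rle_refl _)).
  assert (HB : 0 <= B) by (eapply Rle_trans; [apply Rabs_pos | apply (Hq y); lra]).
  assert (Hpsi' : lipschitz_on psi' (- Rabs h) (Rabs h) B).
  { apply (lipschitz_on_of_is_derive _ (fun r => f'' (y - r) - q)).
    - intros r Hr. assert (Hd : is_derive f' (y - r) (f'' (y - r))) by (apply Hf'; lra).
      unfold psi'. auto_derive.
      + eexists. apply Hd.
      + unfold Rminus in *. rewrite (is_derive_unique_eta _ _ _ Hd). ring.
    - intros r Hr. apply Hq. lra. }
  assert (Hpsi : lipschitz_on psi (- Rabs h) (Rabs h) (B * Rabs h)).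
  { apply (lipschitz_on_of_is_derive _ psi').
    - intros r Hr. assert (Hd : is_derive f (y - r) (f' (y - r))) by (apply Hf; lra).
      unfold psi. auto_derive.
      + eexists. apply Hd.
      + unfold psi', Rminus in *. rewrite (is_derive_unique_eta _ _ _ Hd). field.
    - intros r Hr.
      replace (psi' r) with (psi' r - psi' 0)
        by (unfold psi'; cbv beta; rewrite Rminus_0_r; ring).
      eapply Rle_trans; [apply Hpsi'; lra|].
      apply Rmult_le_compat_l; [exact HB|].
      rewrite Rminus_0_r. apply Rabs_le. lra. }
  replace (f (y - h) - f y + h * f' y - h ^ 2 / 2 * q) with (psi h - psi 0)
    by (unfold psi; rewrite Rminus_0_r; field).
  eapply Rle_trans; [apply Hpsi; lra|].
  rewrite Rminus_0_r, Rmult_assoc, <- pow2_abs. apply Req_le. ring.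
Qed.

Lemma Rabs_scal_le (w x B : R) : 0 <= w -> Rabs x <= B -> Rabs (w * x) <= w * B.
Proof.
  intros Hw Hx. rewrite Rabs_mult, (Rabs_pos_eq w Hw).
  now apply Rmult_le_compat_l.
Qed.

Lemma Rabs_lincomb2_le (w1 w2 x1 x2 B : R) :
  0 <= w1 -> 0 <= w2 -> Rabs x1 <= B -> Rabs x2 <= B ->
  Rabs (w1 * x1 + w2 * x2) <= (w1 + w2) * B.
Proof.
  intros. pose proof (Rabs_triang (w1 * x1) (w2 * x2)).
  pose proof (Rabs_scal_le w1 x1 B). pose proof (Rabs_scal_le w2 x2 B).
  lra.
Qed.

Lemma Rabs_lincomb3_le (w0 w1 w2 x0 x1 x2 B : R) :
  0 <= w0 -> 0 <= w1 -> 0 <= w2 -> Rabs x0 <= B -> Rabs x1 <= B -> Rabs x2 <= B ->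
  Rabs (- w0 * x0 - w1 * x1 - w2 * x2) <= (w0 + w1 + w2) * B.
Proof.
  intros.
  replace (- w0 * x0 - w1 * x1 - w2 * x2) with (- (w0 * x0 + (w1 * x1 + w2 * x2)))
    by ring.
  rewrite Rabs_Ropp.
  pose proof (Rabs_triang (w0 * x0) (w1 * x1 + w2 * x2)).
  pose proof (Rabs_scal_le w0 x0 B). pose proof (Rabs_lincomb2_le w1 w2 x1 x2 B).
  lra.
Qed.

Lemma Lop_lipschitz_on (g k1 k2 a1 a2 : R) (v : R -> R) (lo hi l : R) :
  0 <= g -> 0 <= k1 -> 0 <= k2 -> 0 <= a1 -> a1 <= a2 ->
  lipschitz_on v lo hi l ->
  lipschitz_on (Lop g k1 k2 a1 a2 v) (lo + a2) hi ((g + k1 + k2) * l).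
Proof.
  intros Hg Hk1 Hk2 Ha1 Ha12 Hv x y Hx Hy.
  replace (Lop g k1 k2 a1 a2 v x - Lop g k1 k2 a1 a2 v y) with
    (- g * (v x - v y) - k1 * (v (x - a1) - v (y - a1))
     - k2 * (v (x - a2) - v (y - a2))) by (unfold Lop; ring).
  rewrite Rmult_assoc. apply Rabs_lincomb3_le; auto.
  - apply Hv; lra.
  - replace (x - y) with (x - a1 - (y - a1)) by ring. apply Hv; lra.
  - replace (x - y) with (x - a2 - (y - a2)) by ring. apply Hv; lra.
Qed.

Ltac nonneg :=
  repeat (apply Rmult_le_pos || apply Rplus_le_le_0_compat || apply pow_le); try lra.

Section Expansion.

Variables g k1 k2 a1 a2 c : R.
Variable u : R -> R.
Variables t M : R.

Local Notation K := (g + k1 + k2).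
Local Notation L := (Lop g k1 k2 a1 a2).
Local Notation u' := (sdde_rhs g k1 k2 a1 a2 c u).

Definition sdde_rhs_deriv (x : R) : R :=
  - g * u' x - k1 * ((1 - c * u' x) * u' (x - a1 - c * u x))
  - k2 * ((1 - c * u' x) * u' (x - a2 - c * u x)).

Definition expansion_error1 (x : R) : R :=
  u' x - L u x - k1 * (c * u x) * L u (x - a1) - k2 * (c * u x) * L u (x - a2).

Definition taylor_error2 (x h : R) : R :=
  u (x - h) - u x + h * u' x - h ^ 2 / 2 * L2op g k1 k2 a1 a2 u x.

Lemma remainder_eq :
  remainder g k1 k2 a1 a2 c u t =
    k1 * (c * u t * expansion_error1 (t - a1) - taylor_error2 (t - a1) (c * u t))
  + k2 * (c * u t * expansion_error1 (t - a2) - taylor_error2 (t - a2) (c * u t)).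
Proof.
  unfold remainder, expansion, expansion_error1, taylor_error2, sdde_rhs, L2op, Lop.
  field.
Qed.

Hypotheses (Hg : 0 <= g) (Hk1 : 0 <= k1) (Hk2 : 0 <= k2) (Hc : 0 < c).
Hypotheses (Ha1 : 0 < a1) (Ha12 : a1 < a2).
Hypothesis HcM : 4 * (c * M) <= a1.
Hypothesis Hbound : forall y, t - 5 * a2 <= y <= t -> Rabs (u y) <= M.
Hypothesis Hderiv : forall y, t - 5 * a2 <= y <= t -> is_derive u y (u' y).

Local Notation u'' := sdde_rhs_deriv.

Lemma M_ge0 : 0 <= M.
Proof.
  eapply Rle_trans; [apply Rabs_pos | apply (Hbound t)].
  pose proof (Rlt_trans _ _ _ Ha1 Ha12). lra.
Qed.

Lemma cM_ge0 : 0 <= c * M.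
Proof. pose proof M_ge0. nra. Qed.

Lemma shift_abs_le (y : R) : t - 5 * a2 <= y <= t -> Rabs (c * u y) <= c * M.
Proof. intros Hy. apply Rabs_scal_le; [lra | auto]. Qed.

Lemma shift_between (y : R) : t - 5 * a2 <= y <= t -> - (c * M) <= c * u y <= c * M.
Proof. intros Hy. apply Rabs_le_between, shift_abs_le, Hy. Qed.

Lemma sdde_rhs_abs_le (x : R) : t - 4 * a2 + c * M <= x <= t -> Rabs (u' x) <= K * M.
Proof.
  intros Hx. pose proof cM_ge0. pose proof (shift_between x ltac:(lra)).
  unfold sdde_rhs. apply Rabs_lincomb3_le; auto; apply Hbound; lra.
Qed.

Lemma u_lipschitz : lipschitz_on u (t - 4 * a2 + c * M) t (K * M).
Proof.
  pose proof cM_ge0. apply (lipschitz_on_of_is_derive _ u').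
  - intros x Hx. apply Hderiv. lra.
  - exact sdde_rhs_abs_le.
Qed.

Lemma delay_shift_abs_le (x a : R) :
  t - 3 * a2 + 2 * (c * M) <= x <= t -> a1 <= a <= a2 ->
  Rabs (u (x - a) - u (x - a - c * u x)) <= c * K * M ^ 2.
Proof.
  intros Hx Ha. pose proof cM_ge0. pose proof M_ge0.
  pose proof (shift_between x ltac:(lra)).
  eapply Rle_trans; [apply u_lipschitz; lra|].
  replace (x - a - (x - a - c * u x)) with (c * u x) by ring.
  replace (c * K * M ^ 2) with (K * M * (c * M)) by ring.
  apply Rmult_le_compat_l; [nonneg | apply shift_abs_le; lra].
Qed.

Lemma sdde_rhs_sub_Lop_abs_le (x : R) :
  t - 3 * a2 + 2 * (c * M) <= x <= t -> Rabs (u' x - L u x) <= c * K ^ 2 * M ^ 2.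
Proof.
  intros Hx.
  replace (u' x - L u x) with
    (k1 * (u (x - a1) - u (x - a1 - c * u x)) + k2 * (u (x - a2) - u (x - a2 - c * u x)))
    by (unfold sdde_rhs, Lop; ring).
  eapply Rle_trans.
  { apply Rabs_lincomb2_le; auto; apply delay_shift_abs_le; lra. }
  pose proof M_ge0. assert (0 <= c * K * M ^ 2) by nonneg.
  nra.
Qed.

Lemma sdde_rhs_is_derive (x : R) :
  t - 4 * a2 + c * M <= x <= t -> is_derive u' x (u'' x).
Proof.
  intros Hx. pose proof cM_ge0. pose proof (shift_between x ltac:(lra)).
  assert (Hd0 := Hderiv x ltac:(lra)).
  assert (Hd1 := Hderiv (x - a1 - c * u x) ltac:(lra)).
  assert (Hd2 := Hderiv (x - a2 - c * u x) ltac:(lra)).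
  unfold sdde_rhs at 1. auto_derive.
  - repeat split; eexists; eassumption.
  - unfold sdde_rhs_deriv, Rminus in *.
    rewrite (is_derive_unique_eta _ _ _ Hd0), (is_derive_unique_eta _ _ _ Hd1),
      (is_derive_unique_eta _ _ _ Hd2).
    ring.
Qed.

Lemma sdde_rhs_deriv_abs_le (x : R) :
  t - 3 * a2 + 2 * (c * M) <= x <= t -> Rabs (u'' x) <= (1 + K * a1) * K ^ 2 * M.
Proof.
  intros Hx. pose proof cM_ge0. pose proof (shift_between x ltac:(lra)). pose proof M_ge0.
  assert (Hd := sdde_rhs_abs_le x ltac:(lra)).
  assert (HKM : 0 <= K * M) by (apply Rmult_le_pos; lra).
  assert (Hfactor : Rabs (1 - c * u' x) <= 1 + K * a1).
  { unfold Rminus. eapply Rle_trans; [apply Rabs_triang|].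
    rewrite Rabs_R1, Rabs_Ropp.
    pose proof (Rabs_scal_le c _ _ ltac:(lra) Hd). nra. }
  assert (Hdelayed : forall a, a1 <= a <= a2 ->
            Rabs ((1 - c * u' x) * u' (x - a - c * u x)) <= (1 + K * a1) * (K * M)).
  { intros a Ha. rewrite Rabs_mult.
    apply Rmult_le_compat; auto using Rabs_pos.
    apply sdde_rhs_abs_le; lra. }
  replace ((1 + K * a1) * K ^ 2 * M) with (K * ((1 + K * a1) * (K * M))) by ring.
  apply Rabs_lincomb3_le; auto.
  - assert (0 <= K * a1 * (K * M)) by nonneg. nra.
  - apply Hdelayed; lra.
  - apply Hdelayed; lra.
Qed.

Lemma Lu_lipschitz : lipschitz_on (L u) (t - 3 * a2 + c * M) t (K ^ 2 * M).
Proof.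
  replace (t - 3 * a2 + c * M) with (t - 4 * a2 + c * M + a2) by ring.
  replace (K ^ 2 * M) with (K * (K * M)) by ring.
  apply Lop_lipschitz_on, u_lipschitz; lra.
Qed.

Lemma L2u_lipschitz :
  lipschitz_on (L2op g k1 k2 a1 a2 u) (t - 2 * a2 + c * M) t (K ^ 3 * M).
Proof.
  replace (t - 2 * a2 + c * M) with (t - 3 * a2 + c * M + a2) by ring.
  replace (K ^ 3 * M) with (K * (K ^ 2 * M)) by ring.
  apply Lop_lipschitz_on, Lu_lipschitz; lra.
Qed.

Lemma delayed_deriv_defect_abs_le (x a : R) :
  t - 2 * a2 + 3 * (c * M) <= x <= t -> a1 <= a <= a2 ->
  Rabs ((1 - c * u' x) * u' (x - a - c * u x) - L u (x - a)) <= 3 * c * K ^ 2 * M ^ 2.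
Proof.
  intros Hx Ha. pose proof cM_ge0. pose proof (shift_between x ltac:(lra)). pose proof M_ge0.
  set (y := x - a - c * u x).
  replace ((1 - c * u' x) * u' y - L u (x - a))
    with ((u' y - L u y) + (L u y - L u (x - a)) - c * u' x * u' y) by ring.
  assert (Hdefect : Rabs (u' y - L u y) <= c * K ^ 2 * M ^ 2)
    by (apply sdde_rhs_sub_Lop_abs_le; unfold y; lra).
  assert (Hlip : Rabs (L u y - L u (x - a)) <= c * K ^ 2 * M ^ 2).
  { eapply Rle_trans; [apply Lu_lipschitz; unfold y; lra|].
    replace (y - (x - a)) with (- (c * u x)) by (unfold y; ring).
    rewrite Rabs_Ropp.
    replace (c * K ^ 2 * M ^ 2) with (K ^ 2 * M * (c * M)) by ring.
    apply Rmult_le_compat_l; [nonneg | apply shift_abs_le; lra]. }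
  assert (Hprod : Rabs (c * u' x * u' y) <= c * K ^ 2 * M ^ 2).
  { rewrite Rmult_assoc.
    replace (c * K ^ 2 * M ^ 2) with (c * ((K * M) * (K * M))) by ring.
    apply Rabs_scal_le; [lra|]. rewrite Rabs_mult.
    apply Rmult_le_compat; auto using Rabs_pos;
      apply sdde_rhs_abs_le; unfold y; lra. }
  unfold Rminus at 1. eapply Rle_trans; [apply Rabs_triang|].
  rewrite Rabs_Ropp. pose proof (Rabs_triang (u' y - L u y) (L u y - L u (x - a))).
  lra.
Qed.

Lemma sdde_rhs_deriv_sub_L2op_abs_le (x : R) :
  t - 2 * a2 + 3 * (c * M) <= x <= t ->
  Rabs (u'' x - L2op g k1 k2 a1 a2 u x) <= 3 * c * K ^ 3 * M ^ 2.
Proof.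
  intros Hx. pose proof cM_ge0. pose proof M_ge0.
  replace (u'' x - L2op g k1 k2 a1 a2 u x) with
    (- g * (u' x - L u x)
     - k1 * ((1 - c * u' x) * u' (x - a1 - c * u x) - L u (x - a1))
     - k2 * ((1 - c * u' x) * u' (x - a2 - c * u x) - L u (x - a2)))
    by (unfold sdde_rhs_deriv, L2op, Lop; ring).
  replace (3 * c * K ^ 3 * M ^ 2) with (K * (3 * c * K ^ 2 * M ^ 2)) by ring.
  apply Rabs_lincomb3_le; auto.
  - assert (0 <= c * K ^ 2 * M ^ 2) by nonneg.
    pose proof (sdde_rhs_sub_Lop_abs_le x ltac:(lra)). lra.
  - apply delayed_deriv_defect_abs_le; lra.
  - apply delayed_deriv_defect_abs_le; lra.
Qed.

Lemma taylor_error1_abs_le (x a : R) :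
  t - a2 <= x <= t - a1 -> a1 <= a <= a2 ->
  Rabs (u (x - a - c * u x) - u (x - a) + c * u x * u' (x - a))
    <= (1 + K * a1) * c ^ 2 * K ^ 2 * M ^ 3.
Proof.
  intros Hx Ha. pose proof M_ge0.
  pose proof (shift_abs_le x ltac:(lra)) as Hh.
  pose proof (proj1 (Rabs_le_between _ _) Hh).
  assert (T := taylor2_approx u u' u'' (x - a) (c * u x) 0 ((1 + K * a1) * K ^ 2 * M)).
  rewrite Rmult_0_r, Rminus_0_r in T.
  eapply Rle_trans; [apply T|].
  - intros z Hz. apply Hderiv. lra.
  - intros z Hz. apply sdde_rhs_is_derive. lra.
  - intros z Hz. rewrite Rminus_0_r. apply sdde_rhs_deriv_abs_le. lra.
  - replace ((1 + K * a1) * c ^ 2 * K ^ 2 * M ^ 3)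
      with ((1 + K * a1) * K ^ 2 * M * (c * M) ^ 2) by ring.
    apply Rmult_le_compat_l; [nonneg|].
    rewrite <- pow2_abs. apply pow_incr. split; [apply Rabs_pos | exact Hh].
Qed.

Lemma expansion_error1_abs_le (x : R) :
  t - a2 <= x <= t - a1 ->
  Rabs (expansion_error1 x) <= (2 + K * a1) * c ^ 2 * K ^ 3 * M ^ 3.
Proof.
  intros Hx. pose proof M_ge0.
  set (T a := u (x - a - c * u x) - u (x - a) + c * u x * u' (x - a)).
  replace (expansion_error1 x) with
    (k1 * (c * u x * (u' (x - a1) - L u (x - a1)) - T a1)
     + k2 * (c * u x * (u' (x - a2) - L u (x - a2)) - T a2))
    by (unfold expansion_error1, T, sdde_rhs, Lop; cbv beta; ring).
  set (B := (2 + K * a1) * c ^ 2 * K ^ 2 * M ^ 3).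
  assert (HT : forall a, a1 <= a <= a2 ->
            Rabs (c * u x * (u' (x - a) - L u (x - a)) - T a) <= B).
  { intros a Ha. unfold Rminus at 1. eapply Rle_trans; [apply Rabs_triang|].
    rewrite Rabs_Ropp.
    assert (Rabs (c * u x * (u' (x - a) - L u (x - a))) <= c * M * (c * K ^ 2 * M ^ 2)).
    { rewrite Rabs_mult. apply Rmult_le_compat; try apply Rabs_pos.
      - apply shift_abs_le. lra.
      - apply sdde_rhs_sub_Lop_abs_le. lra. }
    pose proof (taylor_error1_abs_le x a Hx Ha).
    unfold B, T. lra. }
  eapply Rle_trans; [apply Rabs_lincomb2_le; auto; apply HT; lra|].
  assert (0 <= B) by (unfold B; nonneg).
  replace ((2 + K * a1) * c ^ 2 * K ^ 3 * M ^ 3) with (K * B) by (unfold B; ring).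
  nra.
Qed.

Lemma taylor_error2_abs_le (x : R) :
  t - a2 <= x <= t - a1 -> Rabs (taylor_error2 x (c * u t)) <= 4 * c ^ 3 * K ^ 3 * M ^ 4.
Proof.
  intros Hx. pose proof M_ge0.
  pose proof (shift_abs_le t ltac:(lra)) as Hh.
  pose proof (proj1 (Rabs_le_between _ _) Hh).
  assert (T := taylor2_approx u u' u'' x (c * u t) (L2op g k1 k2 a1 a2 u x)
                 (4 * c * K ^ 3 * M ^ 2)).
  eapply Rle_trans; [apply T|].
  - intros z Hz. apply Hderiv. lra.
  - intros z Hz. apply sdde_rhs_is_derive. lra.
  - intros z Hz.
    replace (u'' z - L2op g k1 k2 a1 a2 u x) with
      ((u'' z - L2op g k1 k2 a1 a2 u z)
       + (L2op g k1 k2 a1 a2 u z - L2op g k1 k2 a1 a2 u x)) by ring.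
    eapply Rle_trans; [apply Rabs_triang|].
    pose proof (sdde_rhs_deriv_sub_L2op_abs_le z ltac:(lra)).
    assert (Rabs (L2op g k1 k2 a1 a2 u z - L2op g k1 k2 a1 a2 u x) <= K ^ 3 * M * (c * M)).
    { eapply Rle_trans; [apply L2u_lipschitz; lra|].
      apply Rmult_le_compat_l; [nonneg|]. apply Rabs_le. lra. }
    nra.
  - replace (4 * c ^ 3 * K ^ 3 * M ^ 4) with (4 * c * K ^ 3 * M ^ 2 * (c * M) ^ 2)
      by ring.
    apply Rmult_le_compat_l; [nonneg|].
    rewrite <- pow2_abs. apply pow_incr. split; [apply Rabs_pos | exact Hh].
Qed.

Lemma remainder_abs_le :
  Rabs (remainder g k1 k2 a1 a2 c u t) <= (6 + K * a1) * c ^ 3 * K ^ 4 * M ^ 4.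
Proof.
  pose proof M_ge0. pose proof (shift_abs_le t ltac:(lra)).
  set (B := (6 + K * a1) * c ^ 3 * K ^ 3 * M ^ 4).
  assert (Hterm : forall a, a1 <= a <= a2 ->
    Rabs (c * u t * expansion_error1 (t - a) - taylor_error2 (t - a) (c * u t)) <= B).
  { intros a Ha. unfold Rminus at 1. eapply Rle_trans; [apply Rabs_triang|].
    rewrite Rabs_Ropp.
    assert (Rabs (c * u t * expansion_error1 (t - a))
              <= c * M * ((2 + K * a1) * c ^ 2 * K ^ 3 * M ^ 3)).
    { rewrite Rabs_mult. apply Rmult_le_compat; auto using Rabs_pos.
      apply expansion_error1_abs_le. lra. }
    pose proof (taylor_error2_abs_le (t - a) ltac:(lra)).
    unfold B. nra. }
  rewrite remainder_eq.
  eapply Rle_trans; [apply Rabs_lincomb2_le; auto; apply Hterm; lra|].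
  assert (0 <= B) by (unfold B; nonneg).
  replace ((6 + K * a1) * c ^ 3 * K ^ 4 * M ^ 4) with (K * B) by (unfold B; ring).
  nra.
Qed.

End Expansion.

Theorem theorem2p1 (g k1 k2 c a1 a2 : R)
  (hg : 0 <= g) (hk1 : 0 <= k1) (hk2 : 0 <= k2) (hc : 0 < c)
  (ha1 : 0 < a1) (ha12 : a1 < a2) (hgk : k2 < g) :
  exists delta C : R, 0 < delta /\ 0 <= C /\
    forall u : R -> R,
      (forall t, t <= 0 -> Rabs (u t) <= delta) ->
      (forall t, t < 0 -> derivable_pt_lim u t (sdde_rhs g k1 k2 a1 a2 c u t)) ->
      forall t, t < 0 ->
      forall M : R, (forall th, t - 5 * a2 <= th <= t -> Rabs (u th) <= M) ->
        Rabs (remainder g k1 k2 a1 a2 c u t) <= C * M ^ 4.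
Proof.
  set (K := g + k1 + k2).
  exists (a1 / (4 * c)), ((6 + K * a1) * c ^ 3 * K ^ 4).
  split; [apply Rdiv_lt_0_compat; lra|].
  split; [unfold K; nonneg|].
  intros u Hsmall Hder t Ht M HM.
  set (M' := Rmin M (a1 / (4 * c))).
  assert (HM' : forall y, t - 5 * a2 <= y <= t -> Rabs (u y) <= M').
  { intros y Hy. apply Rmin_glb; [apply HM, Hy | apply Hsmall; lra]. }
  assert (HcM' : 4 * (c * M') <= a1).
  { assert (Hle : c * M' <= c * (a1 / (4 * c)))
      by (apply Rmult_le_compat_l; [lra | apply Rmin_r]).
    replace (c * (a1 / (4 * c))) with (a1 / 4) in Hle by (field; lra). lra. }
  assert (HM'0 : 0 <= M') by (eapply Rle_trans; [apply Rabs_pos | apply (HM' t); lra]).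
  eapply Rle_trans.
  - apply (remainder_abs_le g k1 k2 a1 a2 c u t M'); auto.
    intros y Hy. apply is_derive_Reals, Hder. lra.
  - apply Rmult_le_compat_l; [unfold K; nonneg|].
    apply pow_incr. split; [exact HM'0 | apply Rmin_l].
Qed.
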